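(* Let $T\in\mathcal{B}\subseteq B(\mathcal{F})$ be a band-limited operator such that either $[T,R_j^*]\in\mathcal{S}$ for all $1\le j\le d$, or $[T,R_j]\in\mathcal{S}$ for all $1\le j\le d$. Then $T\in\mathcal{C}=C^*(L_1,\ldots,L_d)$.
   Context: $d\ge2$; $\xi_1,\ldots,\xi_d$ is the standard orthonormal basis of $\mathbb{C}^d$. $\mathcal{F}=\bigoplus_{n\ge0}\mathcal{F}_n$ is the full Fock space, $\mathcal{F}_0=\mathbb{C}\Omega$, $\mathcal{F}_n=(\mathbb{C}^d)^{\otimes n}$ with the usual inner product. $L_j,R_j$ are the left and right creation operators: $L_j\eta=\xi_j\otimes\eta$, $R_j\eta=\eta\otimes\xi_j$ (with $L_j\Omega=R_j\Omega=\xi_j$). An operator $T\in B(\mathcal{F})$ is band-limited if there is $b\ge0$ with $T(\mathcal{F}_n)\subseteq\bigoplus_{m\ge0,|m-n|\le b}\mathcal{F}_m$ for all $n$; $\mathcal{B}$ is the set of band-limited operators. A band-limited $T$ is summable if $\sum_{n\ge0}\|T|_{\mathcal{F}_n}\|<\infty$, where $T|_{\mathcal{F}_n}$ is the restriction of $T$ to $\mathcal{F}_n$; $\mathcal{S}$ is the set of summable band-limited operators. *)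

From HB Require Import structures.
From mathcomp Require Import all_boot all_order all_algebra.
From mathcomp Require Import complex.
From mathcomp Require Import reals.
Set Implicit Arguments.
Unset Strict Implicit.
Unset Printing Implicit Defensive.
Import Order.TTheory GRing.Theory Num.Theory.
Local Open Scope ring_scope.

Section Fock.
Variables (R : realType) (d : nat).

Definition C := R[i].
(* words over the alphabet {0,..,d-1}: basis xi_{w_1} ⊗ ... ⊗ xi_{w_n} of F_n;
   the empty word is the vacuum Omega *)
Definition word := seq 'I_d.
(* vectors of the full Fock space are coefficient functions on words *)
Definition vec := word -> C.
Definition op := vec -> vec.

Definition normsq (z : C) : R := (complex.Re z) ^+ 2 + (complex.Im z) ^+ 2.

(* squared norm of the F_n-component *)
Definition layer (n : nat) (f : vec) : R :=
  \sum_(t : n.-tuple 'I_d) normsq (f (tval t)).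
Definition partial (N : nat) (f : vec) : R := \sum_(n < N) layer n f.

(* sqbound f M  <->  ||f||^2 <= M *)
Definition sqbound (f : vec) (M : R) : Prop := forall N, partial N f <= M.
Definition is_l2 (f : vec) : Prop := exists M, sqbound f M.

(* ||T f||^2 <= c ||f||^2 *)
Definition normsq_le (g f : vec) (c : R) : Prop :=
  forall M, sqbound f M -> sqbound g (c * M).

(* T is (the representative of) an element of B(F) *)
Definition bounded_op (T : op) : Prop :=
  (forall f, is_l2 f -> is_l2 (T f)) /\
  (forall (a : C) f g, is_l2 f -> is_l2 g ->
      T (fun w => a * f w + g w) = (fun w => a * T f w + T g w)) /\
  exists c : R, forall f, is_l2 f -> normsq_le (T f) f c.

Definition op_add (A B : op) : op := fun f w => A f w + B f w.
Definition op_sub (A B : op) : op := fun f w => A f w - B f w.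
Definition op_scale (a : C) (A : op) : op := fun f w => a * A f w.
Definition op_comp (A B : op) : op := fun f => A (B f).
Definition commutator (A B : op) : op := op_sub (op_comp A B) (op_comp B A).

(* L_j eta = xi_j ⊗ eta *)
Definition Lcr (j : 'I_d) : op := fun f w =>
  match w with j' :: w' => if j' == j then f w' else 0 | [::] => 0 end.
Definition Lcr_adj (j : 'I_d) : op := fun f w => f (j :: w).
(* R_j eta = eta ⊗ xi_j *)
Definition Rcr (j : 'I_d) : op := fun f w =>
  match w with
  | [::] => 0
  | x :: w' => if last x w' == j then f (belast x w') else 0
  end.
Definition Rcr_adj (j : 'I_d) : op := fun f w => f (rcons w j).

Definition in_layer (n : nat) (f : vec) : Prop :=
  forall w, size w != n -> f w = 0.

Definition band_limited (T : op) : Prop :=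
  bounded_op T /\
  exists b : nat, forall n f, is_l2 f -> in_layer n f ->
    forall w, ((size w + b < n) || (n + b < size w))%N -> T f w = 0.

(* the set S of summable band-limited operators:
   sum_n ||T|_{F_n}|| < oo, written with explicit bounds c n >= ||T|_{F_n}|| *)
Definition summable_op (T : op) : Prop :=
  band_limited T /\
  exists c : nat -> R,
    (forall n, 0 <= c n) /\
    (exists K : R, forall N, \sum_(n < N) c n <= K) /\
    (forall n f, is_l2 f -> in_layer n f -> normsq_le (T f) f (c n ^+ 2)).

(* the *-algebra generated by L_1, ..., L_d (closed under adjoints since it
   contains the L_j and L_j^* and is closed under +, scalars, products) *)
Inductive star_alg_L : op -> Prop :=
  | sa_L j : star_alg_L (Lcr j)
  | sa_Ladj j : star_alg_L (Lcr_adj j)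
  | sa_add A B : star_alg_L A -> star_alg_L B -> star_alg_L (op_add A B)
  | sa_scale a A : star_alg_L A -> star_alg_L (op_scale a A)
  | sa_comp A B : star_alg_L A -> star_alg_L B -> star_alg_L (op_comp A B).

(* T ∈ C = C*(L_1,...,L_d): the operator-norm closure of the above *)
Definition in_Cuntz_Toeplitz (T : op) : Prop :=
  bounded_op T /\
  forall eps : R, 0 < eps -> exists A, star_alg_L A /\
    forall f, is_l2 f -> normsq_le (op_sub T A f) f eps.

End Fock.

From mathcomp Require Import all_boot all_order all_algebra.
From mathcomp Require Import complex reals boolp.
From mathcomp Require Import ring lra zify.
Import Order.TTheory GRing.Theory Num.Theory.
Local Open Scope ring_scope.
Set Implicit Arguments. Unset Strict Implicit. Unset Printing Implicit Defensive.

(* Let b be the band width of T.  For N > b, the defect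
   D_N := T P_{N+1} - (T P_N) ⊗ 1 (with P_n the projection onto F_n and
   (S ⊗ 1)(η ⊗ ξ_j) = S η ⊗ ξ_j) can be written through the commutators
   [T, R_j^*] restricted to F_{N+1}, respectively [T, R_j] restricted to F_N,
   so its norm e_N is summable.  Telescoping gives
   T P_{m+k} - (T P_m) ⊗ 1^{⊗k} = sum_{i<k} D_{m+i} ⊗ 1^{⊗(k-1-i)}, of norm at
   most sum_{i >= m} e_i, which is small for m large.  The operator
   A_m := sum_{n<m} T P_n + sum_k (T P_m) ⊗ 1^{⊗k} lies in the *-algebra of
   the L_j, because T P_n has finite rank and (T P_m) ⊗ 1^{⊗k} is a finite
   combination of the operators L_w L_t^*.  Since T and A_m are band limited,
   (T - A_m) f at a word x only involves the boundedly many errors with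
   |m + k - |x|| <= b, which yields ||T - A_m|| -> 0. *)

Lemma sum_eq_if (V : nmodType) (I : finType) (i0 : I) (F : I -> V) :
  \sum_(j : I) (if i0 == j then F j else 0) = F i0.
Proof. by rewrite -big_mkcond (big_pred1 i0) // => j; rewrite eq_sym. Qed.

Lemma sum_tuple_eq_if (V : nmodType) (T : finType) l (u : seq T) (F : seq T -> V) :
  \sum_(w : l.-tuple T) (if u == tval w then F w else 0) =
  if size u == l then F u else 0.
Proof.
case: eqP => hu.
  rewrite (bigD1 (Tuple (introT eqP hu))) //= eqxx big1 ?addr0 // => w hw.
  case: eqP => // e.
  have ew : w = Tuple (introT eqP hu) by apply: val_inj; rewrite /= e.
  by rewrite ew eqxx in hw.
apply: big1 => w _; case: eqP => // e; by move: hu; rewrite e size_tuple.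
Qed.

Lemma sum_ord_eq_if (V : nmodType) B k (G : V) :
  \sum_(l < B) (if (l == k :> nat) then G else 0) = if (k < B)%N then G else 0.
Proof.
case: ltnP => hk.
  rewrite (bigD1 (Ordinal hk)) //= eqxx big1 ?addr0 // => l hl.
  case: eqP => // e.
  have el : l = Ordinal hk by apply: val_inj; rewrite /= e.
  by rewrite el eqxx in hl.
apply: big1 => l _; have : (l : nat) != k.
  by apply/eqP => e; move: (ltn_ord l); rewrite e ltnNge hk.
by move/negbTE ->.
Qed.

Lemma sum_tuple_rcons (V : nmodType) (T : finType) n (F : seq T -> V) :
  \sum_(t : n.+1.-tuple T) F t = \sum_(j : T) \sum_(t : n.-tuple T) F (rcons t j).
Proof.
rewrite pair_big /=.
have size_take_tuple (t : n.+1.-tuple T) : size (take n t) == n.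
  by rewrite size_takel // size_tuple.
pose h (p : T * n.-tuple T) : n.+1.-tuple T := Tuple (rcons_tupleP p.2 p.1).
pose g (t : n.+1.-tuple T) : T * n.-tuple T :=
  (tnth t ord_max, Tuple (size_take_tuple t)).
rewrite (reindex h) /=; last first.
  exists g => [[x t] _ | t _].
    rewrite /g /h /=; congr pair.
      by rewrite (tnth_nth x) /= nth_rcons size_tuple ltnn eqxx.
    by apply: val_inj => /=; rewrite -cats1 take_size_cat // size_tuple.
  apply: val_inj => /=.
  rewrite (tnth_nth (tnth t ord_max)) /= -take_nth ?size_tuple //.
  by rewrite take_oversize // size_tuple.
by apply: eq_bigr => -[x t].
Qed.

Lemma sum_ord_widen0 (V : nmodType) N1 N2 (G : nat -> V) :
  (N1 <= N2)%N -> (forall l, (N1 <= l)%N -> (l < N2)%N -> G l = 0) ->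
  \sum_(l < N2) G l = \sum_(l < N1) G l.
Proof.
move=> h hz; rewrite -(subnKC h) big_split_ord /=.
rewrite [X in _ + X = _]big1 ?addr0 // => i _.
apply: hz; [exact: leq_addr | move: (ltn_ord i); clear; lia].
Qed.

Lemma sum_ord_window (V : nmodType) lo hi N (a : nat -> V) :
  (lo <= hi)%N -> (hi <= N)%N ->
  (forall k, (k < lo)%N -> a k = 0) -> (forall k, (hi <= k)%N -> a k = 0) ->
  \sum_(k < N) a k = \sum_(lo <= k < hi) a k.
Proof.
move=> h1 h2 z1 z2.
rewrite -(big_mkord xpredT a) (big_cat_nat (leq0n lo) (leq_trans h1 h2)) /=.
rewrite (big_cat_nat h1 h2) /= big1_seq ?add0r; last first.
  by move=> k /andP[_]; rewrite mem_index_iota => /andP[_ hk]; apply: z1.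
rewrite [X in _ + X]big1_seq ?addr0 // => k /andP[_]; rewrite mem_index_iota.
by move=> /andP[hk _]; exact: z2.
Qed.

Lemma sum_nat_le_ord (R : numDomainType) lo hi N (a : nat -> R) :
  (lo <= hi)%N -> (hi <= N)%N -> (forall k, 0 <= a k) ->
  \sum_(lo <= k < hi) a k <= \sum_(k < N) a k.
Proof.
move=> h1 h2 a0.
rewrite -(big_mkord xpredT a) (big_cat_nat (leq0n lo) (leq_trans h1 h2)) /=.
rewrite (big_cat_nat h1 h2) /= addrC -addrA lerDl.
by apply: addr_ge0; apply: sumr_ge0 => k _; exact: a0.
Qed.

Lemma sum_sqr_le_sqr_sum (R : numDomainType) (I : Type) (s : seq I) (a : I -> R) :
  (forall i, 0 <= a i) -> \sum_(i <- s) a i ^+ 2 <= (\sum_(i <- s) a i) ^+ 2.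
Proof.
move=> a0; elim: s => [|i s IH]; first by rewrite !big_nil expr0n.
rewrite !big_cons sqrrD -addrA lerD2l ler_wpDl // mulrn_wge0 // mulr_ge0 //.
exact: sumr_ge0.
Qed.

Section ComplexNorm.
Variable R : realType.
Implicit Types (x y z : C R) (t : R).

Lemma normsq_ge0 z : 0 <= normsq z.
Proof. by rewrite /normsq addr_ge0 // sqr_ge0. Qed.

Lemma normsq_eq0 z : normsq z = 0 -> z = 0.
Proof.
case: z => a b; rewrite /normsq /= => /eqP.
rewrite paddr_eq0 ?sqr_ge0 // !sqrf_eq0 => /andP[/eqP-> /eqP->]; reflexivity.
Qed.

Lemma normsq0 : normsq (0 : C R) = 0.
Proof. by rewrite /normsq /= expr0n /= addr0. Qed.

Lemma normsqN z : normsq (- z) = normsq z.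
Proof. by case: z => a b; rewrite /normsq /= !sqrrN. Qed.

Lemma normsq_distC x y : normsq (x - y) = normsq (y - x).
Proof. by rewrite -normsqN opprB. Qed.

Lemma normsqD_le x y t : 0 < t ->
  normsq (x + y) <= (1 + t) * normsq x + (1 + t^-1) * normsq y.
Proof.
case: x y => a b [c e]; rewrite /normsq /= => t0.
have sqrD_le u v : (u + v) ^+ 2 <= (1 + t) * u ^+ 2 + (1 + t^-1) * v ^+ 2.
  (* AM-GM: [2 u v <= t u^2 + v^2 / t] *)
  have ti : t * t^-1 = 1 by rewrite mulfV // gt_eqF.
  have : 0 <= t^-1 * (t * u - v) ^+ 2.
    by apply: mulr_ge0; [rewrite invr_ge0 ltW | apply: sqr_ge0].
  have -> : t^-1 * (t * u - v) ^+ 2 = t * u ^+ 2 - 2 * u * v + t^-1 * v ^+ 2.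
    rewrite !expr2 !mulrA ![t^-1 * _ * _]mulrC.
    set s := t^-1.
    transitivity ((t * s) * t * u * u - 2 * (t * s) * u * v + s * v * v);
      last by rewrite ti; ring.
    ring.
  by move=> h; rewrite !expr2; rewrite !expr2 in h; lra.
by have := sqrD_le a c; have := sqrD_le b e; lra.
Qed.

Lemma normsq_sum_le (I : Type) (s : seq I) (z : I -> C R) :
  normsq (\sum_(i <- s) z i) <= (size s)%:R * \sum_(i <- s) normsq (z i).
Proof.
elim: s => [|i s IH]; first by rewrite !big_nil normsq0 mulr0.
rewrite !big_cons /=.
have [s0|sn] := eqVneq (size s) 0%N.
  by move: s0; case: s IH => // _ _; rewrite !big_nil !addr0 mul1r.
have np : 0 < (size s)%:R :> R by rewrite ltr0n lt0n.
apply: le_trans (normsqD_le _ _ np) _.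
have e : (1 + (size s)%:R^-1) * ((size s)%:R * \sum_(j <- s) normsq (z j))
   = ((size s).+1)%:R * \sum_(j <- s) normsq (z j) :> R.
  rewrite mulrSr mulrDl mul1r mulrA mulVf ?gt_eqF // mul1r; ring.
have hh : 0 <= 1 + (size s)%:R^-1 :> R by rewrite addr_ge0 // invr_ge0 ltW.
have := ler_wpM2l hh IH; rewrite e mulrSr.
by have := normsq_ge0 (z i); lra.
Qed.

Lemma normsq_sum_window_le lo hi N (a : nat -> C R) :
  (lo <= hi)%N -> (hi <= N)%N ->
  (forall k, (k < lo)%N -> a k = 0) -> (forall k, (hi <= k)%N -> a k = 0) ->
  normsq (\sum_(k < N) a k) <= (hi - lo)%:R * \sum_(k < N) normsq (a k).
Proof.
move=> h1 h2 z1 z2; rewrite (sum_ord_window h1 h2 z1 z2).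
apply: le_trans (normsq_sum_le _ _) _.
rewrite size_iota ler_wpM2l ?ler0n //.
by apply: sum_nat_le_ord => // k; exact: normsq_ge0.
Qed.

End ComplexNorm.

Section TruncatedNorm.
Variables (R : realType) (d : nat).
Implicit Types (f g h : vec R d) (w x u : word d).

Lemma layer_ge0 n f : 0 <= layer n f.
Proof. by apply: sumr_ge0 => t _; exact: normsq_ge0. Qed.

Lemma partial_ge0 N f : 0 <= partial N f.
Proof. by apply: sumr_ge0 => n _; exact: layer_ge0. Qed.

Lemma partial0 f : partial 0 f = 0.
Proof. by rewrite /partial big_ord0. Qed.

Lemma partialS N f : partial N.+1 f = partial N f + layer N f.
Proof. by rewrite /partial big_ord_recr. Qed.

Lemma partial_le_pointwise N f g :
  (forall w, normsq (f w) <= normsq (g w)) -> partial N f <= partial N g.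
Proof. by move=> h; apply: ler_sum => n _; apply: ler_sum => t _; exact: h. Qed.

Lemma partial_eq_pointwise N f g :
  (forall w, normsq (f w) = normsq (g w)) -> partial N f = partial N g.
Proof. by move=> h; apply: eq_bigr => n _; apply: eq_bigr => t _; exact: h. Qed.

Lemma partial_mono N N' f : (N <= N')%N -> partial N f <= partial N' f.
Proof.
move=> /subnK <-; elim: (N' - N)%N => [|k IH]; first by rewrite add0n.
by rewrite addSn partialS; apply: le_trans IH _; rewrite lerDl layer_ge0.
Qed.

Lemma layer_le_partial n N f : (n < N)%N -> layer n f <= partial N f.
Proof.
move=> h; apply: le_trans (partial_mono f h).
by rewrite partialS lerDr partial_ge0.
Qed.

Lemma normsq_le_layer f w : normsq (f w) <= layer (size w) f.
Proof.
rewrite /layer (bigD1 (Tuple (eqxx (size w)))) //= lerDl.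
by apply: sumr_ge0 => t _; exact: normsq_ge0.
Qed.

Lemma normsq_le_partial N f w : (size w < N)%N -> normsq (f w) <= partial N f.
Proof. by move=> h; apply: le_trans (normsq_le_layer f w) (layer_le_partial f h). Qed.

Lemma layer_sum_shift_le m K f : \sum_(k < K) layer (m + k)%N f <= partial (m + K)%N f.
Proof.
rewrite /partial big_split_ord /= lerDr.
by apply: sumr_ge0 => n _; exact: layer_ge0.
Qed.

Lemma layer_rcons n h :
  layer n.+1 h = \sum_(j < d) layer n (fun u => h (rcons u j)).
Proof. exact: (sum_tuple_rcons n (fun w : word d => normsq (h w))). Qed.

Lemma layer0_eq0 h : h [::] = 0 -> layer 0 h = 0.
Proof.
move=> h0; rewrite /layer big1 // => t _.
by rewrite (_ : tval t = [::]) ?h0 ?normsq0 //; apply/nilP; rewrite /nilp size_tuple.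
Qed.

Lemma partial_rcons N h :
  partial N.+1 h = layer 0 h + \sum_(j < d) partial N (fun u => h (rcons u j)).
Proof.
rewrite /partial big_ord_recl /=; congr (_ + _).
by rewrite exchange_big /=; apply: eq_bigr => n _; exact: layer_rcons.
Qed.

Lemma partial_eq0_add N f g :
  partial N f <= 0 -> partial N (fun w => f w + g w) = partial N g.
Proof.
move=> h.
have e : partial N f = 0 by apply/eqP; rewrite eq_le h partial_ge0.
have e1 := psumr_eq0P (fun n _ => layer_ge0 (nat_of_ord n) f) e.
apply: eq_bigr => n _; apply: eq_bigr => s _.
have e2 := psumr_eq0P (fun s _ => normsq_ge0 (f (tval s))) (e1 n isT).
by rewrite (normsq_eq0 (e2 s isT)) add0r.
Qed.

Lemma partialD_le N f g t : 0 < t ->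
  partial N (fun w => f w + g w) <= (1 + t) * partial N f + (1 + t^-1) * partial N g.
Proof.
move=> t0; rewrite /partial /layer !mulr_sumr -big_split /=.
apply: ler_sum => n _; rewrite !mulr_sumr -big_split /=.
by apply: ler_sum => s _; exact: normsqD_le.
Qed.

Lemma partialD_sqr_le N f g (c1 c2 G : R) :
  0 <= c1 -> 0 <= c2 -> 0 <= G ->
  partial N f <= c1 ^+ 2 * G -> partial N g <= c2 ^+ 2 * G ->
  partial N (fun w => f w + g w) <= (c1 + c2) ^+ 2 * G.
Proof.
move=> h1 h2 hG hf hg.
have [c10|c1p] := eqVneq c1 0.
  rewrite partial_eq0_add; last by move: hf; rewrite c10 expr0n /= mul0r.
  by rewrite c10 add0r.
have [c20|c2p] := eqVneq c2 0.
  rewrite (_ : (fun w => f w + g w) = (fun w => g w + f w)); last first.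
    by apply: funext => w; rewrite addrC.
  rewrite partial_eq0_add; last by move: hg; rewrite c20 expr0n /= mul0r.
  by rewrite c20 addr0.
have c1q : 0 < c1 by rewrite lt_def c1p h1.
have c2q : 0 < c2 by rewrite lt_def c2p h2.
have tq : 0 < c2 / c1 by rewrite divr_gt0.
apply: le_trans (partialD_le _ _ _ tq) _.
have a1 : 0 <= 1 + c2 / c1 by rewrite addr_ge0 // ltW.
have a2 : 0 <= 1 + (c2 / c1)^-1 by rewrite addr_ge0 // invr_ge0 ltW.
apply: le_trans (lerD (ler_wpM2l a1 hf) (ler_wpM2l a2 hg)) _.
rewrite invf_div le_eqVlt; apply/orP; left; apply/eqP.
by rewrite !expr2; field; rewrite c1p c2p.
Qed.

Lemma partial_sum_sqr_le (I : Type) (s : seq I) N (z : I -> vec R d) (c : I -> R)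
    (G : R) :
  0 <= G -> (forall i, 0 <= c i) -> (forall i, partial N (z i) <= c i ^+ 2 * G) ->
  partial N (fun x => \sum_(i <- s) z i x) <= (\sum_(i <- s) c i) ^+ 2 * G.
Proof.
move=> G0 c0 hz; elim: s => [|i s IH].
  rewrite big_nil expr0n /= mul0r /partial big1 // => k _.
  by rewrite /layer big1 // => t _; rewrite big_nil normsq0.
rewrite (_ : (fun x => _) = fun x => z i x + \sum_(j <- s) z j x); last first.
  by apply: funext => x; rewrite big_cons.
by rewrite big_cons; apply: partialD_sqr_le => //; apply: sumr_ge0.
Qed.

Lemma sqbound_ge0 f B : sqbound f B -> 0 <= B.
Proof. by move=> /(_ 0%N); rewrite partial0. Qed.

Lemma l2_le f g : (forall w, normsq (f w) <= normsq (g w)) -> is_l2 g -> is_l2 f.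
Proof.
move=> h [M hM]; exists M => N; apply: le_trans (hM N); exact: partial_le_pointwise.
Qed.

Lemma partial_le_support K N f :
  (forall w, (K <= size w)%N -> f w = 0) -> partial N f <= partial K f.
Proof.
move=> h.
have e N0 : partial N0 f = partial (minn N0 K) f.
  elim: N0 => [|N0 IH]; first by rewrite min0n.
  case: (leqP K N0) => hK.
    rewrite partialS IH /layer big1 ?addr0; last first.
      by move=> t _; rewrite h ?normsq0 // size_tuple.
    by rewrite !(minn_idPr _) // ltnW.
  by rewrite !(minn_idPl _) ?partialS // ltnW.
by rewrite e; apply: partial_mono; exact: geq_minr.
Qed.

Lemma l2_finite_support K f : (forall w, (K <= size w)%N -> f w = 0) -> is_l2 f.
Proof. by move=> h; exists (partial K f) => N; exact: partial_le_support. Qed.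

Lemma l2_0 : is_l2 (fun _ : word d => 0 : C R).
Proof. exact: (l2_finite_support (K := 0)). Qed.

Lemma sqbound_no_descent f (beta : R) :
  0 < beta -> is_l2 f -> ~ (forall B, sqbound f B -> sqbound f (B - beta)).
Proof.
move=> bp [B hB] hs.
have hk (k : nat) : sqbound f (B - k%:R * beta).
  elim: k => [|k IH]; first by rewrite mul0r subr0.
  by have := hs _ IH; congr sqbound; rewrite mulrSr; ring.
have B0 : 0 <= B / beta by rewrite divr_ge0 // ?(sqbound_ge0 hB) // ltW.
have := archi_boundP B0; set k := Num.Def.archi_bound _ => hlt.
have := sqbound_ge0 (hk k); rewrite subr_ge0 => hle.
have : B / beta * beta < k%:R * beta by rewrite ltr_pM2r.
by rewrite divfK ?gt_eqF // => /lt_le_trans/(_ hle); rewrite ltxx.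
Qed.

End TruncatedNorm.

Section LayerProjection.
Variables (R : realType) (d : nat).
Implicit Types (f g : vec R d) (w x u : word d).

Definition proj_layer n g : vec R d := fun u => if size u == n then g u else 0.

Definition tail_vec K f : vec R d := fun u => if (K <= size u)%N then f u else 0.

Lemma layer_proj_layer k n g : layer k (proj_layer n g) = if k == n then layer n g else 0.
Proof.
rewrite /layer /proj_layer; case: eqP => [->|ne].
  by apply: eq_bigr => t _; rewrite size_tuple eqxx.
by rewrite big1 // => t _; rewrite size_tuple; case: eqP => // _; rewrite normsq0.
Qed.

Lemma partial_proj_layer N n g :
  partial N (proj_layer n g) = if (n < N)%N then layer n g else 0.
Proof.
elim: N => [|N IH]; first by rewrite partial0.
rewrite partialS IH layer_proj_layer.
case: (ltngtP n N) => h.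
- by rewrite addr0 ltnS ltnW.
- by rewrite ltnS leqNgt h addr0.
- by rewrite ?h ltnSn add0r.
Qed.

Lemma l2_proj_layer n g : is_l2 (proj_layer n g).
Proof.
apply: (l2_finite_support (K := n.+1)) => w hw; rewrite /proj_layer.
by case: eqP => // e; move: hw; rewrite e ltnn.
Qed.

Lemma in_layer_proj_layer n g : in_layer n (proj_layer n g).
Proof. by move=> w; rewrite /proj_layer => /negbTE ->. Qed.

Lemma sqbound_proj_layer n g : sqbound (proj_layer n g) (layer n g).
Proof. by move=> N; rewrite partial_proj_layer; case: ifP => _; rewrite ?layer_ge0. Qed.

Lemma proj_layer_rcons N g (j : 'I_d) :
  (fun u => proj_layer N.+1 g (rcons u j)) = proj_layer N (fun u => g (rcons u j)).
Proof. by apply: funext => u; rewrite /proj_layer size_rcons eqSS. Qed.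

Lemma proj_layer_sumE K f : (forall w, (K <= size w)%N -> f w = 0) ->
  f = fun u => \sum_(n < K) 1 * proj_layer n f u.
Proof.
move=> hK; apply: funext => u /=; rewrite /proj_layer.
case: (ltnP (size u) K) => hu.
  rewrite (bigD1 (Ordinal hu)) //= eqxx mul1r big1 ?addr0 // => n hn.
  case: eqP => e; last by rewrite mulr0.
  have et : n = Ordinal hu by apply: val_inj; rewrite /= e.
  by rewrite et eqxx in hn.
rewrite hK //; symmetry; apply: big1 => n _; case: eqP => e; last by rewrite mulr0.
by move: (ltn_ord n); rewrite -e ltnNge hu.
Qed.

Lemma l2_tail_vec K f : is_l2 f -> is_l2 (tail_vec K f).
Proof.
apply: l2_le => w; rewrite /tail_vec; case: ifP => _ //.
by rewrite normsq0 normsq_ge0.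
Qed.

Lemma partial_tail_vec K N f :
  partial N (tail_vec K f) + partial K f = partial (maxn N K) f.
Proof.
have layer_tail n : layer n (tail_vec K f) = if (K <= n)%N then layer n f else 0.
  rewrite /layer /tail_vec; case: ifP => h.
    by apply: eq_bigr => t _; rewrite size_tuple h.
  by rewrite big1 // => t _; rewrite size_tuple h normsq0.
elim: N => [|N IH]; first by rewrite partial0 add0r max0n.
rewrite partialS layer_tail; case: (leqP K N) => h.
  rewrite (maxn_idPl _) ?(leqW h) // partialS.
  by move: IH; rewrite (maxn_idPl h) => <-; ring.
by rewrite addr0 IH !(maxn_idPr _) // ltnW.
Qed.

Lemma sqbound_tail_vec K f B :
  sqbound f B -> sqbound (tail_vec K f) (B - partial K f).
Proof. by move=> hB N; rewrite lerBrDr partial_tail_vec; exact: hB. Qed.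

End LayerProjection.

Section BandExpansion.
Variables (R : realType) (d : nat) (T : op R d).
Hypothesis hT : bounded_op T.
Implicit Types (f g : vec R d) (w x u v : word d).

Definition basis_vec v : vec R d := fun u => if u == v then 1 else 0.

Definition entry w v : C R := T (basis_vec v) w.

Definition band_width (b : nat) : Prop :=
  forall n f, is_l2 f -> in_layer n f ->
    forall w, ((size w + b < n) || (n + b < size w))%N -> T f w = 0.

Lemma op0 : T (fun _ => 0) = fun _ => 0.
Proof.
case: hT => _ [hlin _]; have := hlin 1 _ _ (l2_0 R d) (l2_0 R d).
rewrite (_ : (fun w => 1 * 0 + 0) = fun _ => 0); last first.
  by apply: funext => w; rewrite mulr0 addr0.
move=> e; apply: funext => w; have /= := congr1 (fun F => F w) e.
by rewrite mul1r => /eqP; rewrite eq_sym -subr_eq0 addrK => /eqP.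
Qed.

Lemma op_sum (I : Type) K (s : seq I) (a : I -> C R) (phi : I -> vec R d) :
  (forall i w, (K <= size w)%N -> phi i w = 0) ->
  T (fun u => \sum_(i <- s) a i * phi i u) = fun x => \sum_(i <- s) a i * T (phi i) x.
Proof.
move=> hK; elim: s => [|i s IH].
  rewrite (_ : (fun u => _) = fun _ => 0) ?op0; last first.
    by apply: funext => w; rewrite big_nil.
  by apply: funext => w; rewrite big_nil.
have l2i : is_l2 (phi i) by apply: (l2_finite_support (K := K)) => w /hK.
have l2s : is_l2 (fun u => \sum_(j <- s) a j * phi j u).
  apply: (l2_finite_support (K := K)) => w hw /=.
  by apply: big1 => j _; rewrite hK ?mulr0.
rewrite (_ : (fun u => _) = fun u => a i * phi i u + \sum_(j <- s) a j * phi j u).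
  case: hT => _ [hlin _]; rewrite (hlin _ _ _ l2i l2s) IH.
  by apply: funext => w; rewrite big_cons.
by apply: funext => w; rewrite big_cons.
Qed.

Lemma op_proj_layerE n g x :
  T (proj_layer n g) x = \sum_(t : n.-tuple 'I_d) g t * entry x t.
Proof.
have -> : proj_layer n g = fun u => \sum_(t : n.-tuple 'I_d) g t * basis_vec t u.
  apply: funext => u /=; rewrite /proj_layer /basis_vec.
  under eq_bigr => t _ do rewrite (fun_if (fun z => g t * z)) mulr1 mulr0.
  by rewrite sum_tuple_eq_if.
rewrite (op_sum (K := n.+1)) // => t w hw; rewrite /basis_vec; case: eqP => // e.
by move: hw; rewrite e size_tuple ltnn.
Qed.

Lemma op_finite_supportE K f x : (forall w, (K <= size w)%N -> f w = 0) ->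
  T f x = \sum_(n < K) T (proj_layer n f) x.
Proof.
move=> hK; rewrite {1}(proj_layer_sumE hK) (op_sum (K := K)).
  by apply: eq_bigr => n _; rewrite mul1r.
move=> n w hw; rewrite /proj_layer; case: eqP => // e.
by move: (ltn_ord n); rewrite -e ltnNge hw.
Qed.

Section Band.
Variable b : nat.
Hypothesis hb : band_width b.

Lemma entry_band_eq0 w v : ((size w + b < size v) || (size v + b < size w))%N ->
  entry w v = 0.
Proof.
move=> h; apply: (hb (n := size v)) => //.
  apply: (l2_finite_support (K := (size v).+1)) => u hu; rewrite /basis_vec.
  by case: eqP => // e; move: hu; rewrite e ltnn.
by move=> u hu; rewrite /basis_vec; case: eqP => // e; move: hu; rewrite e eqxx.
Qed.

Lemma op_proj_layer_band_eq0 n f x :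
  ((size x + b < n) || (n + b < size x))%N -> T (proj_layer n f) x = 0.
Proof. exact/hb/in_layer_proj_layer/l2_proj_layer. Qed.

Lemma op_tail_vec_cutoff f x M : is_l2 f -> (size x + b + 1 <= M)%N ->
  T (tail_vec (size x + b + 1)%N f) x = T (tail_vec M f) x.
Proof.
move=> hf hKM; set K := (size x + b + 1)%N.
pose mid : vec R d := fun u => if (K <= size u < M)%N then f u else 0.
have mid0 w : (M <= size w)%N -> mid w = 0 by rewrite /mid ltnNge => ->; rewrite andbF.
have e : tail_vec K f = fun u => 1 * mid u + tail_vec M f u.
  apply: funext => u /=; rewrite /tail_vec /mid mul1r.
  case: (leqP M (size u)) => h1.
    by rewrite (leq_trans hKM h1) andbF add0r.
  by rewrite andbT addr0.
have l2m : is_l2 mid by exact: (l2_finite_support (K := M)).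
case: (hT) => _ [hlin _].
rewrite e (hlin _ _ _ l2m (l2_tail_vec _ hf)) mul1r (op_finite_supportE _ mid0).
rewrite big1 ?add0r // => n _; case: (ltnP n K) => hn.
  rewrite (_ : proj_layer n mid = fun _ => 0) ?op0 //.
  by apply: funext => u; rewrite /proj_layer /mid; case: eqP => // ->; rewrite leqNgt hn.
by apply: op_proj_layer_band_eq0; apply/orP; left; move: hn; rewrite /K addn1.
Qed.

(* Band limitation only controls vectors of finite support.  On the tail of f
   the value at x does not depend on the cut-off, and is bounded by c times
   the norm of an arbitrarily far tail, hence it vanishes. *)
Lemma op_tail_vec_eq0 f x : is_l2 f -> T (tail_vec (size x + b + 1)%N f) x = 0.
Proof.
move=> hf; set K := (size x + b + 1)%N.
case: (hT) => _ [_ [c hc]].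
set y := T (tail_vec K f) x.
have [y0|yn] := eqVneq y 0; first by [].
have y_gt0 : 0 < normsq y.
  by rewrite lt_def normsq_ge0 andbT; apply: contra yn => /eqP/normsq_eq0 ->.
have y_le B M : sqbound f B -> (K <= M)%N -> normsq y <= c * (B - partial M f).
  move=> hB hKM.
  have := hc _ (l2_tail_vec M hf) _ (sqbound_tail_vec M hB) (size x).+1.
  by apply: le_trans; rewrite /y (op_tail_vec_cutoff hf hKM); exact: normsq_le_partial.
have c_gt0 : 0 < c.
  case: (hf) => B hB; have := y_le B K hB (leqnn K).
  have := sqbound_ge0 (sqbound_tail_vec K hB) => h1 h2.
  rewrite ltNge; apply/negP => hc0.
  have : c * (B - partial K f) <= 0 by rewrite mulr_le0_ge0.
  by move/(le_trans h2); rewrite leNgt y_gt0.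
exfalso; apply: (@sqbound_no_descent _ _ f (normsq y / c)) => //.
  by rewrite divr_gt0.
move=> B hB N.
have h2 : partial (maxn N K) f <= B - normsq y / c.
  rewrite lerBrDr -lerBrDl -(ler_pM2l c_gt0) mulrC divfK ?gt_eqF //.
  exact: y_le (leq_maxr _ _).
exact: le_trans (partial_mono f (leq_maxl N K)) h2.
Qed.

Lemma op_band_expansion f x : is_l2 f ->
  T f x = \sum_(n < (size x + b + 1)%N) T (proj_layer n f) x.
Proof.
move=> hf; set K := (size x + b + 1)%N.
pose fK : vec R d := fun u => if (size u < K)%N then f u else 0.
have fK0 w : (K <= size w)%N -> fK w = 0 by rewrite /fK ltnNge => ->.
have e : f = fun u => 1 * fK u + tail_vec K f u.
  apply: funext => u /=; rewrite /fK /tail_vec mul1r.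
  by case: ltnP => _; rewrite ?addr0 ?add0r.
case: (hT) => _ [hlin _].
rewrite {1}e (hlin _ _ _ (l2_finite_support fK0) (l2_tail_vec _ hf)) mul1r.
rewrite op_tail_vec_eq0 // addr0 (op_finite_supportE _ fK0).
apply: eq_bigr => n _; congr (T _ x); apply: funext => u.
by rewrite /proj_layer /fK; case: eqP => // ->; rewrite ltn_ord.
Qed.

End Band.
End BandExpansion.

Section Ampliation.
Variables (R : realType) (d : nat).
Implicit Types (F G : vec R d -> vec R d) (g : vec R d) (x u : word d).

Definition layer_bounded F n (c : R) : Prop :=
  forall g N, partial N (F g) <= c ^+ 2 * layer n g.

(* F ⊗ 1, acting on the last letter: (F ⊗ 1)(η ⊗ ξ_j) = F η ⊗ ξ_j. *)
Definition ampliate F : vec R d -> vec R d := fun g x =>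
  if x is y :: x' then F (fun u => g (rcons u (last y x'))) (belast y x') else 0.

Lemma ampliate_rcons F g x j : ampliate F g (rcons x j) = F (fun u => g (rcons u j)) x.
Proof. by case: x => [|y x] //=; rewrite last_rcons belast_rcons. Qed.

Lemma layer_bounded_ext F G n c :
  (forall g x, F g x = G g x) -> layer_bounded F n c -> layer_bounded G n c.
Proof. by move=> e h g N; rewrite (_ : G g = F g) //; apply: funext => x; rewrite e. Qed.

Lemma layer_bounded0 F n : (forall g x, F g x = 0) -> layer_bounded F n 0.
Proof.
move=> e g N; rewrite expr0n /= mul0r /partial big1 // => k _.
by rewrite /layer big1 // => t _; rewrite e normsq0.
Qed.

Lemma layer_bounded_le F n c c' :
  layer_bounded F n c -> 0 <= c -> c <= c' -> layer_bounded F n c'.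
Proof.
move=> h c0 cc g N; apply: le_trans (h g N) _.
by rewrite ler_wpM2r ?layer_ge0 // lerXn2r // nnegrE (le_trans c0).
Qed.

Lemma layer_boundedD F G n c1 c2 : 0 <= c1 -> 0 <= c2 ->
  layer_bounded F n c1 -> layer_bounded G n c2 ->
  layer_bounded (fun g x => F g x + G g x) n (c1 + c2).
Proof. by move=> h1 h2 b1 b2 g N; apply: partialD_sqr_le; rewrite ?layer_ge0. Qed.

Lemma layer_bounded_ampliate F n c :
  layer_bounded F n c -> layer_bounded (ampliate F) n.+1 c.
Proof.
move=> h g [|N]; first by rewrite partial0 mulr_ge0 ?sqr_ge0 ?layer_ge0.
rewrite partial_rcons layer0_eq0 // add0r layer_rcons mulr_sumr.
apply: ler_sum => j _.
rewrite (_ : (fun u => _) = F (fun u => g (rcons u j))); first exact: h.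
by apply: funext => u; rewrite ampliate_rcons.
Qed.

End Ampliation.

Section Defect.
Variables (R : realType) (d : nat) (T : op R d).
Hypothesis hT : bounded_op T.
Implicit Types (f g : vec R d) (x u : word d).

Local Notation TP n := (fun g => T (proj_layer n g)).

Definition defect N : vec R d -> vec R d :=
  fun g x => T (proj_layer N.+1 g) x - ampliate (TP N) g x.

Lemma Rcr_rcons (j j' : 'I_d) (v : vec R d) u :
  Rcr j v (rcons u j') = if j' == j then v u else 0.
Proof. by case: u => [|y u] //=; rewrite last_rcons belast_rcons. Qed.

Lemma defect_bound_Rcr_adj b N (c : 'I_d -> R) :
  band_width T b -> (b < N.+1)%N -> (forall j, 0 <= c j) ->
  (forall j f, is_l2 f -> in_layer N.+1 f ->
       normsq_le (commutator T (Rcr_adj j) f) f (c j ^+ 2)) ->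
  layer_bounded (defect N) N.+1 (\sum_j c j).
Proof.
move=> hb hbN c0 hc g [|M]; first by rewrite partial0 mulr_ge0 ?sqr_ge0 ?layer_ge0.
rewrite partial_rcons layer0_eq0 ?add0r; last first.
  by rewrite /defect subr0 (op_proj_layer_band_eq0 hb) //= add0n hbN.
apply: le_trans (_ : \sum_j c j ^+ 2 * layer N.+1 g <= _); last first.
  by rewrite -mulr_suml ler_wpM2r ?layer_ge0 // sum_sqr_le_sqr_sum.
apply: ler_sum => j _.
(* at [rcons u j], D_N g is minus the commutator [T, R_j^*] applied to P_{N+1} g *)
rewrite (_ : partial M _ = partial M (commutator T (Rcr_adj j) (proj_layer N.+1 g))).
  exact: hc (l2_proj_layer _ _) (in_layer_proj_layer _) _ (sqbound_proj_layer _ _) M.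
apply: partial_eq_pointwise => u.
by rewrite /defect /commutator /op_sub /op_comp ampliate_rcons normsq_distC /Rcr_adj
  proj_layer_rcons.
Qed.

Lemma defectE_Rcr N g x :
  defect N g x =
  \sum_(j < d) commutator T (Rcr j) (proj_layer N (fun u => g (rcons u j))) x.
Proof.
have gE : proj_layer N.+1 g =
    fun u => \sum_(j < d) 1 * Rcr j (proj_layer N (fun u => g (rcons u j))) u.
  apply: funext => u; case: (lastP u) => [|u' j'].
    by rewrite /proj_layer /= big1 // => j _; rewrite mulr0.
  under eq_bigr => j _ do rewrite mul1r Rcr_rcons.
  by rewrite sum_eq_if -(proj_layer_rcons N g j').
have TgE : T (proj_layer N.+1 g) x =
    \sum_(j < d) T (Rcr j (proj_layer N (fun u => g (rcons u j)))) x.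
  rewrite gE (op_sum hT (K := N.+2)); first by under eq_bigr => j _ do rewrite mul1r.
  move=> j w; case: (lastP w) => [|w' j'] //; rewrite size_rcons ltnS Rcr_rcons => h.
  case: eqP => // _; rewrite /proj_layer; case: eqP => // e; by move: h; rewrite e ltnn.
have ampE : ampliate (TP N) g x =
    \sum_(j < d) Rcr j (T (proj_layer N (fun u => g (rcons u j)))) x.
  case: (lastP x) => [|x' j']; first by rewrite big1.
  by rewrite ampliate_rcons; under eq_bigr => j _ do rewrite Rcr_rcons; rewrite sum_eq_if.
by rewrite /defect TgE ampE -sumrB.
Qed.

Lemma defect_bound_Rcr N (c : 'I_d -> R) : (forall j, 0 <= c j) ->
  (forall j f, is_l2 f -> in_layer N f ->
       normsq_le (commutator T (Rcr j) f) f (c j ^+ 2)) ->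
  layer_bounded (defect N) N.+1 (\sum_j c j).
Proof.
move=> c0 hc g M.
rewrite (_ : defect N g = fun x => \sum_(j < d)
    commutator T (Rcr j) (proj_layer N (fun u => g (rcons u j))) x); last first.
  by apply: funext => x; rewrite defectE_Rcr.
apply: partial_sum_sqr_le; rewrite ?layer_ge0 // => j.
have hl : layer N (fun u => g (rcons u j)) <= layer N.+1 g.
  rewrite layer_rcons (bigD1 j) //= lerDl.
  by apply: sumr_ge0 => i _; exact: layer_ge0.
apply: le_trans (hc j _ (l2_proj_layer _ _) (in_layer_proj_layer _) _
  (sqbound_proj_layer _ _) M) _.
by rewrite ler_wpM2l ?sqr_ge0.
Qed.

Definition ampliation_TP m k : vec R d -> vec R d := iter k (@ampliate R d) (TP m).

Lemma ampliation_TPE m k g x : ampliation_TP m k g x =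
  if (k <= size x)%N then
    \sum_(t : m.-tuple 'I_d) entry T (take (size x - k) x) t * g (t ++ drop (size x - k) x)
  else 0.
Proof.
elim: k g x => [|k IH] g x.
  rewrite /= op_proj_layerE // subn0 take_size drop_size.
  by apply: eq_bigr => t _; rewrite cats0 mulrC.
rewrite /ampliation_TP iterS; case: (lastP x) => [|x' j] //.
rewrite ampliate_rcons -/(ampliation_TP m k) IH size_rcons ltnS subSS; case: ifP => // hk.
have take_rcons n (s : word d) a : (n <= size s)%N -> take n (rcons s a) = take n s.
  by move=> h; rewrite -cats1 takel_cat.
apply: eq_bigr => t _.
by rewrite take_rcons ?leq_subr // drop_rcons ?leq_subr // rcons_cat.
Qed.

Definition ampliation_error m k : vec R d -> vec R d :=
  fun g x => T (proj_layer (m + k)%N g) x - ampliation_TP m k g x.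

Lemma ampliation_error_bound m (e : nat -> R) : (forall n, 0 <= e n) ->
  (forall N, (m <= N)%N -> layer_bounded (defect N) N.+1 (e N)) ->
  forall k, layer_bounded (ampliation_error m k) (m + k)%N (\sum_(i < k) e (m + i)%N).
Proof.
move=> e0 hD; elim=> [|k IH].
  rewrite big_ord0; apply: layer_bounded0 => g x.
  by rewrite /ampliation_error /= addn0 subrr.
rewrite big_ord_recr /= addrC addnS.
(* E_{k+1} = D_{m+k} + E_k ⊗ 1 *)
apply: (@layer_bounded_ext _ _
  (fun g x => defect (m + k)%N g x + ampliate (ampliation_error m k) g x)).
  move=> g x; rewrite /defect /ampliation_error /ampliation_TP iterS addnS.
  by case: (lastP x) => [|x' j]; rewrite ?ampliate_rcons /=; ring.
apply: layer_boundedD; rewrite ?sumr_ge0 //.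
  by apply: hD; rewrite leq_addr.
exact: layer_bounded_ampliate.
Qed.

End Defect.

Section WordOperators.
Variables (R : realType) (d : nat) (j0 : 'I_d).
Implicit Types (f : vec R d) (w v x u : word d).

Fixpoint Lword w : op R d :=
  if w is j :: w' then op_comp (Lcr j) (Lword w') else id.

Fixpoint Lword_adj w : op R d :=
  if w is j :: w' then op_comp (Lword_adj w') (Lcr_adj j) else id.

(* The projection onto the vacuum, Q = 1 - sum_j L_j L_j^*. *)
Definition vacuum_proj : op R d := fun f x => if x is [::] then f [::] else 0.

Lemma LwordE w f x :
  Lword w f x = if take (size w) x == w then f (drop (size w) x) else 0.
Proof.
elim: w x => [|j w IH] x /=; first by rewrite take0 drop0.
rewrite /op_comp /Lcr; case: x => [|j' x] //=.
by rewrite IH eqseq_cons; case: (j' == j).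
Qed.

Lemma Lword_adjE v f u : Lword_adj v f u = f (v ++ u).
Proof. by elim: v f => [|j v IH] f //=; rewrite /op_comp IH. Qed.

Lemma star_alg_L_ext (A B : op R d) :
  star_alg_L A -> (forall f w, A f w = B f w) -> star_alg_L B.
Proof.
move=> h e; rewrite (_ : B = A) //.
by apply: funext => f; apply: funext => w; rewrite e.
Qed.

Lemma star_alg_L_id : star_alg_L (@id (vec R d)).
Proof.
apply: (star_alg_L_ext (sa_comp (sa_Ladj R j0) (sa_L R j0))) => f w.
by rewrite /op_comp /Lcr_adj /Lcr eqxx.
Qed.

Lemma star_alg_L_sum (I : Type) (s : seq I) (F : I -> op R d) :
  (forall i, star_alg_L (F i)) -> star_alg_L (fun f w => \sum_(i <- s) F i f w).
Proof.
move=> h; elim: s => [|i s IH].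
  apply: (star_alg_L_ext (sa_scale 0 star_alg_L_id)) => f w.
  by rewrite /op_scale mul0r big_nil.
by apply: (star_alg_L_ext (sa_add (h i) IH)) => f w; rewrite big_cons.
Qed.

Lemma star_alg_L_Lword w : star_alg_L (Lword w).
Proof.
by elim: w => [|j w IH] /=; [exact: star_alg_L_id | exact: sa_comp (sa_L R j) IH].
Qed.

Lemma star_alg_L_Lword_adj w : star_alg_L (Lword_adj w).
Proof.
by elim: w => [|j w IH] /=; [exact: star_alg_L_id | exact: sa_comp IH (sa_Ladj R j)].
Qed.

Lemma star_alg_L_vacuum_proj : star_alg_L vacuum_proj.
Proof.
have h := sa_add star_alg_L_id (sa_scale (-1) (star_alg_L_sum (index_enum 'I_d)
             (fun j => sa_comp (sa_L R j) (sa_Ladj R j)))).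
apply: (star_alg_L_ext h) => f [|j' x]; rewrite /op_add /op_scale /op_comp /=.
  by rewrite big1 ?mulr0 ?addr0.
under eq_bigr => j _ do rewrite /Lcr /Lcr_adj.
by rewrite sum_eq_if mulN1r subrr.
Qed.

End WordOperators.

Section Approximant.
Variables (R : realType) (d : nat) (T : op R d) (b : nat).
Hypotheses (hT : bounded_op T) (hb : band_width T b).
Implicit Types (f : vec R d) (x : word d).

(* A_m = sum_{n<m} T P_n + sum_k (T P_m) ⊗ 1^{⊗k}, written in the L_j: the
   rank-one operators L_w Q L_t^* give the matrix of T P_n, and L_w L_t^* maps
   ξ_t ⊗ η to ξ_w ⊗ η.  By band limitation only |w| < m + b + 1 matters. *)
Definition approx m : op R d := fun f x =>
  \sum_(n < m) \sum_(t : n.-tuple 'I_d) \sum_(l < (m + b + 1)%N) \sum_(w : l.-tuple 'I_d)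
     entry T w t * Lword w (vacuum_proj (Lword_adj t f)) x
  + \sum_(t : m.-tuple 'I_d) \sum_(l < (m + b + 1)%N) \sum_(w : l.-tuple 'I_d)
     entry T w t * Lword w (Lword_adj t f) x.

Lemma star_alg_L_approx (j0 : 'I_d) m : star_alg_L (approx m).
Proof.
have low : star_alg_L (fun f x => \sum_(n < m) \sum_(t : n.-tuple 'I_d)
    \sum_(l < (m + b + 1)%N) \sum_(w : l.-tuple 'I_d)
     entry T w t * Lword w (vacuum_proj (Lword_adj t f)) x).
  apply: (star_alg_L_sum j0) => n; apply: (star_alg_L_sum j0) => t.
  apply: (star_alg_L_sum j0) => l; apply: (star_alg_L_sum j0) => w.
  apply: (star_alg_L_ext (sa_scale (entry T w t) (sa_comp (star_alg_L_Lword R j0 w)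
    (sa_comp (star_alg_L_vacuum_proj R j0) (star_alg_L_Lword_adj R j0 t))))) => //.
have high : star_alg_L (fun f x => \sum_(t : m.-tuple 'I_d)
    \sum_(l < (m + b + 1)%N) \sum_(w : l.-tuple 'I_d)
     entry T w t * Lword w (Lword_adj t f) x).
  apply: (star_alg_L_sum j0) => t; apply: (star_alg_L_sum j0) => l.
  apply: (star_alg_L_sum j0) => w.
  apply: (star_alg_L_ext (sa_scale (entry T w t) (sa_comp (star_alg_L_Lword R j0 w)
    (star_alg_L_Lword_adj R j0 t)))) => //.
exact: (star_alg_L_ext (sa_add low high)).
Qed.

Lemma approx_low_termE m n (t : n.-tuple 'I_d) f x : (n < m)%N ->
  \sum_(l < (m + b + 1)%N) \sum_(w : l.-tuple 'I_d)
    entry T w t * Lword w (vacuum_proj (Lword_adj t f)) x = entry T x t * f t.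
Proof.
move=> hn.
have termE (l : 'I_(m + b + 1)) : \sum_(w : l.-tuple 'I_d)
    entry T w t * Lword w (vacuum_proj (Lword_adj t f)) x =
    if (l == size x :> nat) then entry T x t * f t else 0.
  under eq_bigr => w _ do
    rewrite LwordE size_tuple (fun_if (fun z => entry T w t * z)) mulr0.
  rewrite (@sum_tuple_eq_if _ _ l (take l x)
    (fun w => entry T w t * vacuum_proj (Lword_adj t f) (drop l x))).
  rewrite size_take; case: (ltngtP l (size x)) => h.
  - rewrite ?eqxx ?(ltn_eqF h); case E: (drop l x) => [|y s]; last by rewrite mulr0.
    by move: (congr1 size E); rewrite size_drop /= => /eqP; rewrite subn_eq0 leqNgt h.
  - by rewrite ?(ltn_eqF h).
  - by rewrite ?h eqxx take_size drop_size /vacuum_proj Lword_adjE cats0.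
rewrite (eq_bigr _ (fun l _ => termE l)) sum_ord_eq_if; case: ltnP => // hx.
rewrite (entry_band_eq0 hb) ?mul0r //; apply/orP; right; rewrite size_tuple.
by move: hx hn; clear; lia.
Qed.

Lemma approx_high_termE m (t : m.-tuple 'I_d) l f x :
  \sum_(w : l.-tuple 'I_d) entry T w t * Lword w (Lword_adj t f) x =
  if (l <= size x)%N then entry T (take l x) t * f (t ++ drop l x) else 0.
Proof.
have size_take_eq : (size (take l x) == l) = (l <= size x)%N.
  rewrite size_take; case: (ltngtP l (size x)) => h.
  - by rewrite eqxx ?ltnW.
  - by rewrite ?(ltn_eqF h) ?leqNgt ?h.
  - by rewrite ?h eqxx ?leqnn.
under eq_bigr => w _ do
  rewrite LwordE size_tuple (fun_if (fun z => entry T w t * z)) mulr0.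
rewrite (@sum_tuple_eq_if _ _ l (take l x)
  (fun w => entry T w t * Lword_adj t f (drop l x))).
by rewrite size_take_eq Lword_adjE.
Qed.

Lemma approxE m f x : approx m f x =
  \sum_(n < m) T (proj_layer n f) x + \sum_(k < (size x + 1)%N) ampliation_TP T m k f x.
Proof.
rewrite /approx; congr (_ + _).
  apply: eq_bigr => n _; rewrite op_proj_layerE //.
  by apply: eq_bigr => t _; rewrite approx_low_termE // mulrC.
under eq_bigr => t _ do under eq_bigr => l _ do rewrite approx_high_termE.
rewrite exchange_big /=.
pose G (l : nat) := if (l <= size x)%N then
   \sum_(t : m.-tuple 'I_d) entry T (take l x) t * f (t ++ drop l x) else 0.
rewrite (eq_bigr (fun l : 'I_(m + b + 1) => G l)); last first.
  by move=> l _; rewrite /G; case: ifP => // _; exact: big1.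
have G0 l : (minn (m + b + 1) (size x + 1) <= l)%N -> G l = 0.
  rewrite geq_min /G => /orP[h|h]; case: ifP => // hl.
    apply: big1 => t _; rewrite (entry_band_eq0 hb) ?mul0r //; apply/orP; right.
    by rewrite size_tuple size_takel //; move: h; clear; lia.
  by move: h hl; clear; lia.
rewrite /= (@sum_ord_widen0 _ (minn (m + b + 1) (size x + 1)) (m + b + 1) G) ?geq_minl //;
  last by move=> l hl _; apply: G0.
rewrite -(@sum_ord_widen0 _ (minn (m + b + 1) (size x + 1)) (size x + 1) G) ?geq_minr //;
  last by move=> l hl _; apply: G0.
(* reindex l = |x| - k: the k-fold ampliation reads the prefix of length |x| - k *)
rewrite (reindex_inj rev_ord_inj) /=; apply: eq_bigr => k _.
have hk : (size x + 1 - k.+1 = size x - k)%N by move: (ltn_ord k); clear; lia.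
rewrite ampliation_TPE // /G hk leq_subr.
by rewrite (_ : (k <= size x)%N) // -ltnS -(addn1 (size x)) ltn_ord.
Qed.

Lemma op_sub_approxE m f x : is_l2 f ->
  T f x - approx m f x = \sum_(k < (size x + b + 1)%N) ampliation_error T m k f x.
Proof.
move=> hf; rewrite (op_band_expansion hT hb x hf) approxE.
rewrite -(@sum_ord_widen0 _ (size x + b + 1) (m + (size x + b + 1))
  (fun n => T (proj_layer n f) x)) ?leq_addl //; last first.
  move=> l hl _; apply: (op_proj_layer_band_eq0 hb).
  by apply/orP; left; move: hl; clear; lia.
rewrite big_split_ord /=.
rewrite -(@sum_ord_widen0 _ (size x + 1) (size x + b + 1)
  (fun k => ampliation_TP T m k f x)); last first.
- by move=> l hl _; rewrite ampliation_TPE //; case: ifP => // h; move: hl h; clear; lia.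
- by rewrite leq_add2r leq_addr.
rewrite opprD addrACA.
rewrite (_ : \sum_(i < m) T (proj_layer (lshift (size x + b + 1) i) f) x -
  \sum_(n < m) T (proj_layer n f) x = 0); last by apply/eqP; rewrite subr_eq0.
by rewrite add0r -sumrB.
Qed.

Lemma ampliation_error_band_eq0 m k f x :
  ((m + k + b < size x) || (size x + b < m + k))%N -> ampliation_error T m k f x = 0.
Proof.
move=> h; rewrite /ampliation_error (op_proj_layer_band_eq0 hb) ?sub0r; last first.
  by move: h; clear; case/orP => h; apply/orP; [right | left]; lia.
rewrite ampliation_TPE //; case: ifP => hk; last by rewrite oppr0.
rewrite big1 ?oppr0 // => t _; rewrite (entry_band_eq0 hb) ?mul0r //.
rewrite size_tuple size_takel ?leq_subr //.
by move: h hk; clear; case/orP => h hk; apply/orP; [right | left]; lia.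
Qed.

(* Only the 2b+1 errors with |m + k - |x|| <= b contribute at a word x. *)
Lemma normsq_op_sub_approx_le m f x N : is_l2 f -> (size x < N)%N ->
  normsq (op_sub T (approx m) f x) <=
  (2 * b + 1)%:R * \sum_(k < (N + b + 1)%N) normsq (ampliation_error T m k f x).
Proof.
move=> hf hx; rewrite /op_sub op_sub_approxE //.
have S0 : 0 <= \sum_(k < (size x + b + 1)%N) normsq (ampliation_error T m k f x).
  by apply: sumr_ge0 => k _; exact: normsq_ge0.
apply: le_trans (@normsq_sum_window_le _ (size x - b - m) (size x + b + 1 - m)
  _ (fun k => ampliation_error T m k f x) _ _ _ _) _.
- by clear; lia.
- by clear; lia.
- move=> k hk; apply: ampliation_error_band_eq0; apply/orP; left.
  by move: hk; clear; lia.
- move=> k hk; apply: ampliation_error_band_eq0; apply/orP; right.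
  by move: hk; clear; lia.
apply: le_trans (ler_wpM2r S0 (_ : _ <= (2 * b + 1)%:R)) _.
  by rewrite ler_nat; clear; lia.
rewrite ler_wpM2l ?ler0n //.
have := @sum_nat_le_ord R 0 (size x + b + 1) (N + b + 1)
  (fun k => normsq (ampliation_error T m k f x)).
by rewrite big_mkord; apply => //; [move: hx; clear; lia | move=> k; exact: normsq_ge0].
Qed.

Lemma approx_error_bound m (dl : R) f B : 0 <= dl ->
  (forall k, layer_bounded (ampliation_error T m k) (m + k)%N dl) -> is_l2 f ->
  sqbound f B -> sqbound (op_sub T (approx m) f) ((2 * b + 1)%:R * dl ^+ 2 * B).
Proof.
move=> dl0 hE hf hB N.
set c := ((2 * b + 1)%:R : R).
apply: le_trans (_ : c * \sum_(k < (N + b + 1)%N) partial N (ampliation_error T m k f)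
  <= _).
  apply: le_trans (_ : \sum_(L < N) \sum_(x : L.-tuple 'I_d)
      (c * \sum_(k < (N + b + 1)%N) normsq (ampliation_error T m k f x)) <= _).
    apply: ler_sum => L _; apply: ler_sum => x _.
    by apply: normsq_op_sub_approx_le; rewrite ?size_tuple.
  rewrite /partial /layer le_eqVlt; apply/orP; left; apply/eqP.
  under eq_bigr => L _ do under eq_bigr => x _ do rewrite mulr_sumr.
  under eq_bigr => L _ do rewrite exchange_big /=.
  rewrite exchange_big /= mulr_sumr; apply: eq_bigr => k _.
  by rewrite mulr_sumr; apply: eq_bigr => L _; rewrite mulr_sumr.
rewrite -mulrA ler_wpM2l ?ler0n //.
apply: le_trans (_ : \sum_(k < (N + b + 1)%N) dl ^+ 2 * layer (m + k)%N f <= _).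
  by apply: ler_sum => k _; exact: hE.
rewrite -mulr_sumr ler_wpM2l ?sqr_ge0 //.
exact: le_trans (layer_sum_shift_le _ _ _) (hB _).
Qed.

End Approximant.

Section Approximation.
Variables (R : realType) (d : nat).

Lemma summable_tail_le (e : nat -> R) K : (forall n, 0 <= e n) ->
  (forall N, \sum_(n < N) e n <= K) ->
  forall (dl : R) m0, 0 < dl ->
  exists2 m, (m0 <= m)%N & forall k, \sum_(i < k) e (m + i)%N <= dl.
Proof.
move=> e0 hK dl m0 dl0; apply: contrapT => hn.
have big_tail m : (m0 <= m)%N -> exists k, dl < \sum_(i < k) e (m + i)%N.
  move=> hm; apply: contrapT => h2; apply: hn; exists m => // k.
  by rewrite leNgt; apply/negP => h3; apply: h2; exists k.
(* j disjoint tails of mass > dl would force the partial sums above j dl *)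
have sum_ge (j : nat) : exists2 N, (m0 <= N)%N & j%:R * dl <= \sum_(n < N) e n.
  elim: j => [|j [N hN hs]]; first by exists m0; rewrite // mul0r sumr_ge0.
  case: (big_tail N hN) => k hk; exists (N + k)%N; first exact: leq_trans hN (leq_addr _ _).
  rewrite big_split_ord /= -addn1 natrD mulrDl mul1r; apply: lerD hs (ltW hk).
have K0 : 0 <= K by have := hK 0%N; rewrite big_ord0.
have := archi_boundP (divr_ge0 K0 (ltW dl0)); set j := Num.Def.archi_bound _ => hlt.
case: (sum_ge j) => N _ hs.
have : K / dl * dl < j%:R * dl by rewrite ltr_pM2r.
rewrite divfK ?gt_eqF // => /lt_le_trans/(_ hs) hKs.
by have := le_lt_trans (hK N) hKs; rewrite ltxx.
Qed.

Lemma in_Cuntz_Toeplitz_of_defect_bound (j0 : 'I_d) (T : op R d) b (e : nat -> R) K :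
  bounded_op T -> band_width T b -> (forall n, 0 <= e n) ->
  (forall N, \sum_(n < N) e n <= K) ->
  (forall N, (b < N.+1)%N -> layer_bounded (defect T N) N.+1 (e N)) ->
  in_Cuntz_Toeplitz T.
Proof.
move=> hT hb e0 hK hD; split => // eps eps0.
set c := ((2 * b + 1)%:R : R).
have c_gt0 : 0 < c by rewrite /c ltr0n addn1.
set dl := Num.min 1 (eps / c).
have dl_gt0 : 0 < dl by rewrite /dl lt_min ltr01 divr_gt0.
have dl_le1 : dl <= 1 by rewrite /dl ge_min lexx.
have dl_le : dl <= eps / c by rewrite /dl ge_min lexx orbT.
have [m hm htail] := summable_tail_le e0 hK b.+1 dl_gt0.
have hE k : layer_bounded (ampliation_error T m k) (m + k)%N dl.
  apply: layer_bounded_le (ampliation_error_bound e0 _ k) _ _ => //.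
  - by move=> N hN; apply: hD; move: hm hN; clear; lia.
  - by apply: sumr_ge0 => i _.
exists (approx T b m); split; first exact: star_alg_L_approx.
move=> f hf B hB N; apply: le_trans (approx_error_bound hT hb (ltW dl_gt0) hE hf hB N) _.
rewrite ler_wpM2r ?(sqbound_ge0 hB) //.
have : dl ^+ 2 <= dl by rewrite expr2 ler_piMr // ltW.
move=> /(ler_wpM2l (ltW c_gt0))/le_trans; apply.
by rewrite -ler_pdivlMl // mulrC.
Qed.

Lemma summable_ops_bounds (A : 'I_d -> op R d) : (forall j, summable_op (A j)) ->
  exists c : 'I_d -> nat -> R,
    [/\ forall j n, 0 <= c j n,
        exists K, forall N, \sum_(n < N) \sum_j c j n <= K &
        forall j n f, is_l2 f -> in_layer n f -> normsq_le (A j f) f (c j n ^+ 2)].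
Proof.
move=> hA; have [c hc] := choice (fun j => proj2 (hA j)).
have [K hK] := choice (fun j => proj1 (proj2 (hc j))).
exists c; split.
- by move=> j; case: (hc j).
- exists (\sum_j K j) => N; rewrite exchange_big /=.
  by apply: ler_sum => j _; exact: hK.
- by move=> j; case: (hc j) => _ [_].
Qed.

End Approximation.

Unset Implicit Arguments.

Theorem theorem3p8 (R : realType) (d : nat) (hd : (2 <= d)%N) (T : op R d) :
  band_limited T ->
  ((forall j : 'I_d, summable_op (commutator T (@Rcr_adj R d j))) \/
   (forall j : 'I_d, summable_op (commutator T (@Rcr R d j)))) ->
  in_Cuntz_Toeplitz T.
Proof.
move=> [hT [b hb]] hc.
have j0 : 'I_d := Ordinal (leq_trans (isT : (0 < 2)%N) hd).
case: hc => /summable_ops_bounds [c [c0 [K hK] hcb]].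
- apply: (in_Cuntz_Toeplitz_of_defect_bound j0 hT hb
    (e := fun N => \sum_j c j N.+1) (K := K)).
  + by move=> n; apply: sumr_ge0.
  + by move=> N; apply: le_trans (hK N.+1); rewrite big_ord_recl lerDr sumr_ge0.
  + move=> N hN; apply: (defect_bound_Rcr_adj (c := fun j => c j N.+1) hb hN).
      by move=> j; exact: c0.
    by move=> j; exact: hcb.
- apply: (in_Cuntz_Toeplitz_of_defect_bound j0 hT hb
    (e := fun N => \sum_j c j N) (K := K)) => //.
  + by move=> n; apply: sumr_ge0.
  + move=> N _; apply: (@defect_bound_Rcr R d T hT N (fun j => c j N)).
      by move=> j; exact: c0.
    by move=> j; exact: hcb.
Qed.
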